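(* Let $G$ be a countable abelian group, let $B$ be a Bohr neighborhood of $0$ in $G$, and let $c\in\mathbb Z$ be such that $cG$ has finite index in $G$. Then $cB=\{cb:b\in B\}$ contains a Bohr neighborhood of $0$ in $G$.
   Context: $G$ is discrete. A Bohr neighborhood of $0$ in $G$ is a set $\{g\in G:|\chi_i(g)-1|<\varepsilon,\ 1\le i\le r\}$ for some $r\in\mathbb N$, homomorphisms $\chi_1,\dots,\chi_r:G\to\{z\in\mathbb C:|z|=1\}$ and $\varepsilon>0$. $cG=\{cg:g\in G\}$. *)

From mathcomp Require Import all_boot all_algebra.
From Stdlib Require Import Reals.
From Coquelicot Require Complex.

Set Implicit Arguments.
Unset Strict Implicit.
Unset Printing Implicit Defensive.

Definition is_character (G : zmodType) (chi : G -> Complex.C) : Prop :=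
  (forall g : G, Complex.Cmod (chi g) = R1) /\
  (forall g h : G, chi (GRing.add g h) = Complex.Cmult (chi g) (chi h)).

Definition bohr_set (G : zmodType) (r : nat) (chi : nat -> G -> Complex.C)
  (eps : R) : G -> Prop :=
  fun g => forall i, (i < r)%N ->
    Rlt (Complex.Cmod (Complex.Cminus (chi i g) (Complex.RtoC R1))) eps.

Definition bohr_nbhd (G : zmodType) (B : G -> Prop) : Prop :=
  exists (r : nat) (chi : nat -> G -> Complex.C) (eps : R),
    (forall i, (i < r)%N -> is_character (chi i)) /\ Rlt R0 eps /\
    (forall g, B g <-> bohr_set r chi eps g).

Definition mul_subgroup (G : zmodType) (c : int) : G -> Prop :=
  fun g => exists h : G, g = intmul h c.

Definition finite_index (G : zmodType) (H : G -> Prop) : Prop :=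
  exists s : seq G, forall g : G, exists2 t, t \in s & H (GRing.add g (GRing.opp t)).

(* Let H = cG. Characters of a subgroup of finite index extend to G: adjoin
   coset representatives one at a time; each has some finite order m modulo the
   current subgroup, and any m-th root of the prescribed value extends the
   character. Hence H is cut out by finitely many characters, so it contains a
   Bohr neighbourhood, and a character trivial on the c-torsion G[c] descends
   along h |-> c h.
   Let B be defined by chi_1, ..., chi_r and let g = c h lie in a small Bohr
   neighbourhood. Each chi_i h is close to a c-th root of unity zeta^(a_i). If
   the pattern a in (Z/c)^r is realised by some k in G[c], then b = h - k lies
   in B and g = c b. Otherwise a character of (Z/c)^r separates a from the
   patterns realised by G[c]; its exponents M give a character prod chi_i^M_i
   trivial on G[c], whose descent takes at g a value far from 1. Adding these
   finitely many descended characters to the neighbourhood rules this case out.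
   Negative c reduces to -c by symmetry of Bohr sets, and c = 0 forces G to be
   finite. *)

From HB Require Import structures.
From mathcomp Require Import all_boot all_algebra.
From Stdlib Require Import Reals Lra Lia ZArith Classical ClassicalEpsilon.
From Coquelicot Require Import Complex.

Set Implicit Arguments.
Unset Strict Implicit.
Unset Printing Implicit Defensive.

Import GRing.Theory.

(* %R is the delimiter of the reals, so group expressions are written %G. *)
Delimit Scope ring_scope with G.
Local Open Scope R_scope.

Definition cis (t : R) : C := (cos t, sin t).

Lemma Cmod_cis t : Cmod (cis t) = 1.
Proof.
rewrite /Cmod /cis /= -[RHS]sqrt_1; f_equal.
have := sin2_cos2 t; rewrite /Rsqr; lra.
Qed.

Lemma cis0 : cis 0 = 1%C.
Proof. by rewrite /cis cos_0 sin_0. Qed.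

Lemma cisD a b : cis (a + b) = (cis a * cis b)%C.
Proof. rewrite /cis /Cmult /= cos_plus sin_plus; f_equal; ring. Qed.

Lemma cisX t k : (cis t ^ k)%C = cis (INR k * t).
Proof.
elim: k => [|k IH] /=; first by rewrite Rmult_0_l cis0.
rewrite IH -cisD; f_equal; case: k {IH} => /= *; ring.
Qed.

Lemma cis_2PI_nat (m : nat) : cis (2 * PI * INR m) = 1%C.
Proof.
have -> : 2 * PI * INR m = 0 + 2 * INR m * PI by ring.
by rewrite /cis cos_period sin_period cos_0 sin_0.
Qed.

Lemma cis_2PI_Z (k : Z) : cis (2 * PI * IZR k) = 1%C.
Proof.
case: (Z_le_gt_dec 0 k) => Hk.
  by rewrite -(Z2Nat.id k Hk) -INR_IZR_INZ cis_2PI_nat.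
have E := cis_2PI_nat (Z.to_nat (- k)).
rewrite INR_IZR_INZ Z2Nat.id in E; last by lia.
have := cisD (2 * PI * IZR k) (2 * PI * IZR (- k)).
rewrite E Cmult_1_r opp_IZR (_ : _ + _ = 0); last by ring.
by rewrite cis0.
Qed.

Lemma Cmod1_cis w : Cmod w = 1 -> exists t, w = cis t.
Proof.
case: w => a b; rewrite /Cmod /= => Hw.
have Hab : a * a + b * b = 1.
{ have H0 : 0 <= a * (a * 1) + b * (b * 1) by nra.
  have := sqrt_sqrt _ H0; rewrite Hw; lra. }
have Ha : -1 <= a <= 1 by nra.
have Hb : sqrt (1 - a ^ 2) = Rabs b.
{ rewrite -sqrt_Rsqr_abs /Rsqr; f_equal; lra. }
case: (Rle_dec 0 b) => Hb0.
- exists (acos a); rewrite /cis cos_acos // sin_acos //.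
  by rewrite (_ : a² = a ^ 2) /Rsqr ?Hb ?Rabs_pos_eq //=; ring.
- exists (- acos a); rewrite /cis cos_neg sin_neg cos_acos // sin_acos //.
  rewrite (_ : a² = a ^ 2) /Rsqr ?Hb ?Rabs_left /=; [f_equal; ring | lra | ring].
Qed.

Lemma exists_nth_root w m : (0 < m)%nat -> Cmod w = 1 ->
  exists z, Cmod z = 1 /\ (z ^ m)%C = w.
Proof.
move=> /ltP Hm /Cmod1_cis [t ->].
have Hm' : 0 < INR m by apply: lt_0_INR.
exists (cis (t / INR m)); split; first exact: Cmod_cis.
rewrite cisX; f_equal; field; lra.
Qed.

Lemma Cmod_cis_sub1 t : Cmod (cis t - 1) = sqrt (2 - 2 * cos t).
Proof.
rewrite /Cmod /cis /=; f_equal.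
have := sin2_cos2 t; rewrite /Rsqr; nra.
Qed.

Lemma Cmod_cis_sub1_le u v : Rabs v <= Rabs u <= PI ->
  Cmod (cis v - 1) <= Cmod (cis u - 1).
Proof.
move=> [Hvu HuPI]; rewrite !Cmod_cis_sub1; apply: sqrt_le_1_alt.
have Habs x : cos x = cos (Rabs x).
{ by rewrite /Rabs; case: Rcase_abs; rewrite ?cos_neg. }
have := cos_decr_1 (Rabs v) (Rabs u) (Rabs_pos v) ltac:(lra) (Rabs_pos u) HuPI Hvu.
rewrite -!Habs; lra.
Qed.

Lemma round_2PI x : exists k : Z, Rabs (x - 2 * PI * IZR k) <= PI.
Proof.
have HPI := PI_RGT_0.
set y := (x + PI) / (2 * PI).
have Ey : 2 * PI * y = x + PI by rewrite /y; field; lra.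
have [Hup1 Hup2] := archimed y.
exists (up y - 1)%Z; rewrite minus_IZR; apply: Rabs_le; nra.
Qed.

Lemma Cmod_sub1_gt0 (z : C) : z <> 1%C -> 0 < Cmod (z - 1).
Proof.
move=> z1; apply/Cmod_gt_0 => E; apply: z1.
have -> : z = (z - 1 + 1)%C by ring.
by rewrite E Cplus_0_l.
Qed.

Definition zeta (n j : nat) : C := cis (2 * PI * INR j / INR n).

Lemma Cmod_zeta n j : Cmod (zeta n j) = 1.
Proof. exact: Cmod_cis. Qed.

Lemma zeta0 n : zeta n 0 = 1%C.
Proof. by rewrite /zeta /= Rmult_0_r /Rdiv Rmult_0_l cis0. Qed.

Lemma zetaD n a b : zeta n (a + b) = (zeta n a * zeta n b)%C.
Proof. by rewrite /zeta -cisD plus_INR; f_equal; rewrite /Rdiv; ring. Qed.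

Lemma zetaX n a k : (zeta n a ^ k)%C = zeta n (a * k).
Proof. by rewrite /zeta cisX mult_INR; f_equal; rewrite /Rdiv; ring. Qed.

Lemma zeta_Z n (k : Z) : (0 < n)%nat ->
  zeta n (Z.to_nat (k mod Z.of_nat n)) = cis (2 * PI * IZR k / INR n).
Proof.
move=> /ltP Hn.
have Hn' : 0 < INR n by apply: lt_0_INR.
have [Hr0 _] := Z.mod_pos_bound k (Z.of_nat n) ltac:(lia).
rewrite /zeta INR_IZR_INZ Z2Nat.id // [in RHS](Z_div_mod_eq_full k (Z.of_nat n)).
rewrite plus_IZR mult_IZR -INR_IZR_INZ.
have -> : 2 * PI * (INR n * IZR (k / Z.of_nat n) + IZR (k mod Z.of_nat n)) / INR n
  = 2 * PI * IZR (k mod Z.of_nat n) / INR n + 2 * PI * IZR (k / Z.of_nat n)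
  by field; lra.
by rewrite cisD cis_2PI_Z Cmult_1_r.
Qed.

Lemma zeta_modn n a : (0 < n)%nat -> zeta n (a %% n) = zeta n a.
Proof.
move=> /ltP Hn; rewrite {2}(divn_eq a n) addnC zetaD.
have -> : zeta n (a %/ n * n) = 1%C.
{ rewrite /zeta mult_INR.
  have -> : 2 * PI * (INR (a %/ n) * INR n) / INR n = 2 * PI * IZR (Z.of_nat (a %/ n)).
  { rewrite -INR_IZR_INZ; field; apply: not_0_INR; lia. }
  exact: cis_2PI_Z. }
by rewrite Cmult_1_r.
Qed.

Lemma zeta_expn n j : (0 < n)%nat -> (zeta n j ^ n)%C = 1%C.
Proof. by move=> Hn; rewrite zetaX -zeta_modn // modnMl zeta0. Qed.

Lemma zeta1_neq1 n : (1 < n)%nat -> zeta n 1 <> 1%C.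
Proof.
move=> /leP Hn E.
have Hn' : 2 <= INR n by apply: (le_INR 2).
have HPI := PI_RGT_0.
have Hinv : 0 < / INR n <= / 2 by split; [apply: Rinv_0_lt_compat | apply: Rinv_le_contravar]; lra.
have : cos (2 * PI * INR 1 / INR n) < cos 0.
{ apply: cos_decreasing_1; rewrite /= /Rdiv; nra. }
have E1 : cos (2 * PI * INR 1 / INR n) = 1 := f_equal fst E.
by rewrite cos_0 E1; lra.
Qed.

Lemma near_root_of_unity n w : (0 < n)%nat -> Cmod w = 1 ->
  exists2 j, (j < n)%nat & Cmod (w - zeta n j) <= Cmod (w ^ n - 1).
Proof.
move=> Hn /Cmod1_cis [t ->].
have Hn' : 0 < INR n by apply: lt_0_INR; apply/ltP.
have [k Hk] := round_2PI (INR n * t).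
set u := INR n * t - 2 * PI * IZR k in Hk.
exists (Z.to_nat (k mod Z.of_nat n)).
{ have := Z.mod_pos_bound k (Z.of_nat n); move/ltP: Hn => Hn0.
  move=> /(_ ltac:(lia)) Hb; apply/ltP; lia. }
rewrite zeta_Z // cisX.
have -> : cis t = (cis (2 * PI * IZR k / INR n) * cis (u / INR n))%C
  by rewrite -cisD; f_equal; rewrite /u; field; lra.
have -> : INR n * t = u + 2 * PI * IZR k by rewrite /u; ring.
rewrite cisD cis_2PI_Z Cmult_1_r.
have -> : (cis (2 * PI * IZR k / INR n) * cis (u / INR n) - cis (2 * PI * IZR k / INR n))%C
  = (cis (2 * PI * IZR k / INR n) * (cis (u / INR n) - 1))%C by ring.
rewrite Cmod_mult Cmod_cis Rmult_1_l; apply: Cmod_cis_sub1_le; split => //.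
have H1 : 1 <= INR n by apply: (le_INR 1); apply/leP.
rewrite /Rdiv Rabs_mult (Rabs_pos_eq (/ INR n)); last by left; apply: Rinv_0_lt_compat.
have : / INR n <= 1 by rewrite -Rinv_1; apply: Rinv_le_contravar; lra.
have := Rabs_pos u; have := Rinv_0_lt_compat _ Hn'; nra.
Qed.

Lemma root_of_unity_zeta n w : (0 < n)%nat -> Cmod w = 1 -> (w ^ n)%C = 1%C ->
  exists2 j, (j < n)%nat & w = zeta n j.
Proof.
move=> Hn Hw Hwn; have [j Hj] := near_root_of_unity Hn Hw.
rewrite Hwn (_ : 1 - 1 = 0)%C ?Cmod_0 => [Hd|]; last by ring.
exists j => //.
have /Cmod_eq_0 E : Cmod (w - zeta n j) = 0 by have := Cmod_ge_0 (w - zeta n j); lra.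
have -> : w = (w - zeta n j + zeta n j)%C by ring.
by rewrite E Cplus_0_l.
Qed.

Section PartialCharacters.
Variable G : zmodType.
Implicit Types (H : G -> Prop) (w : G -> C).

Definition is_subgroup H := H 0%G /\ forall x y, H x -> H y -> H (x - y)%G.

Definition char_on H w :=
  (forall g, H g -> Cmod (w g) = 1) /\
  (forall g h, H g -> H h -> w (g + h)%G = (w g * w h)%C).

Lemma subgroupT : is_subgroup (fun _ => True).
Proof. by []. Qed.

Lemma subgroupN H x : is_subgroup H -> H x -> H (- x)%G.
Proof. by move=> [H0 HB] Hx; rewrite -sub0r; apply: HB. Qed.

Lemma subgroupD H x y : is_subgroup H -> H x -> H y -> H (x + y)%G.
Proof. by move=> HH Hx Hy; rewrite -(opprK y); apply: HH.2 => //; apply: subgroupN. Qed.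

Lemma subgroupMn H x k : is_subgroup H -> H x -> H (x *+ k)%G.
Proof.
move=> HH Hx; elim: k => [|k IH]; first by rewrite mulr0n; apply: HH.1.
by rewrite mulrS; apply: subgroupD.
Qed.

Lemma char_onT chi : is_character chi <-> char_on (fun _ => True) chi.
Proof. by split=> -[H1 H2]; split=> *; [apply: H1 | apply: H2 | apply: H1 | apply: H2]. Qed.

Section CharOn.
Variables (H : G -> Prop) (w : G -> C).
Hypotheses (HH : is_subgroup H) (Hw : char_on H w).

Lemma char_on0 : w 0%G = 1%C.
Proof.
have H0 := HH.1; have E := Hw.2 _ _ H0 H0; rewrite addr0 in E.
have Hnz : w 0%G <> 0%C by move=> E0; have := Hw.1 _ H0; rewrite E0 Cmod_0; lra.
transitivity (w 0%G * w 0%G / w 0%G)%C; first by field.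
by rewrite -E; field.
Qed.

Lemma char_onMn x k : H x -> w (x *+ k)%G = (w x ^ k)%C.
Proof.
move=> Hx; elim: k => [|k IH]; first by rewrite mulr0n char_on0.
by rewrite mulrS Hw.2 //; [rewrite IH | apply: subgroupMn].
Qed.

Lemma char_onB x y : H x -> H y -> (w (x - y)%G * w y)%C = w x.
Proof. by move=> Hx Hy; rewrite -Hw.2 ?subrK //; apply: HH.2. Qed.

End CharOn.

Section Characters.
Variable chi : G -> C.
Hypothesis Hchi : is_character chi.

Lemma character0 : chi 0%G = 1%C.
Proof. exact: char_on0 subgroupT (proj1 (char_onT chi) Hchi). Qed.

Lemma characterMn x k : chi (x *+ k)%G = (chi x ^ k)%C.
Proof. exact: char_onMn subgroupT (proj1 (char_onT chi) Hchi) x k I. Qed.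

Lemma characterB x y : (chi (x - y)%G * chi y)%C = chi x.
Proof. exact: char_onB subgroupT (proj1 (char_onT chi) Hchi) x y I I. Qed.

Lemma Cmod_characterB_sub1 x y : Cmod (chi (x - y)%G - 1) = Cmod (chi x - chi y).
Proof.
have -> : (chi x - chi y = (chi (x - y)%G - 1) * chi y)%C by rewrite -(characterB x y); ring.
by rewrite Cmod_mult Hchi.1 Rmult_1_r.
Qed.

End Characters.

Definition adjoin H t : G -> Prop :=
  fun g => exists p : G * nat, H p.1 /\ g = (p.1 + t *+ p.2)%G.

Lemma exists_min_order H t n : (0 < n)%nat -> H (t *+ n)%G ->
  exists m, [/\ (0 < m)%nat, H (t *+ m)%G & forall j, (0 < j < m)%nat -> ~ H (t *+ j)%G].
Proof.
move=> Hn Htn.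
pose P j := if excluded_middle_informative ((0 < j)%nat /\ H (t *+ j)%G) then true else false.
have PE j : P j <-> (0 < j)%nat /\ H (t *+ j)%G by rewrite /P; case: excluded_middle_informative.
have [m /PE [Hm Htm] Hmin] := ex_minnP (ex_intro P n (proj2 (PE n) (conj Hn Htn))).
exists m; split => // j /andP [Hj Hjm] Htj.
by have := Hmin j (proj2 (PE j) (conj Hj Htj)); rewrite leqNgt Hjm.
Qed.

Section Adjoin.
Variables (H : G -> Prop) (w : G -> C) (t : G) (m : nat) (z : C).
Hypotheses (HH : is_subgroup H) (Hw : char_on H w).
Hypotheses (m_gt0 : (0 < m)%nat) (Htm : H (t *+ m)%G).
Hypothesis m_min : forall j, (0 < j < m)%nat -> ~ H (t *+ j)%G.
Hypotheses (Cmod_z : Cmod z = 1) (z_root : (z ^ m)%C = w (t *+ m)%G).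

Lemma adjoin_order_dvd d : H (t *+ d)%G -> (m %| d)%nat.
Proof.
move=> Htd; apply/negPn/negP => Hr.
apply: (m_min (j := d %% m)); first by rewrite lt0n Hr ltn_pmod.
have -> : (t *+ (d %% m) = t *+ d - (t *+ m) *+ (d %/ m))%G.
  by rewrite {2}(divn_eq d m) mulrnDr -mulrnA mulnC addrAC subrr add0r.
by apply: HH.2 => //; apply: subgroupMn.
Qed.

Lemma adjoin_char_wd h k h' k' : H h -> H h' -> (h + t *+ k = h' + t *+ k')%G ->
  (w h * z ^ k)%C = (w h' * z ^ k')%C.
Proof.
wlog le_k'k : h k h' k' / (k' <= k)%nat.
  move=> IH Hh Hh' E; case: (leqP k' k) => [|/ltnW] le; first exact: IH.
  by symmetry; apply: IH.
move=> Hh Hh' E; set d := (k - k')%nat.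
have Ek : k = (k' + d)%nat by rewrite subnKC.
have Eh' : h' = (h + t *+ d)%G.
  by apply: (addIr (t *+ k')%G); rewrite -E Ek mulrnDr addrAC addrA.
have Htd : H (t *+ d)%G.
  by rewrite (_ : t *+ d = h' - h)%G; [apply: HH.2 | rewrite Eh' addrAC subrr add0r].
have /dvdnP [q Eq] := adjoin_order_dvd Htd.
rewrite Eh' Hw.2 // Ek Eq Cpow_add_r mulnC mulrnA (char_onMn HH Hw) //.
by rewrite -z_root -Cpow_mult_r multE; ring.
Qed.

(* The value 1 outside the adjoined subgroup is junk. *)
Definition adjoin_char (g : G) : C :=
  match excluded_middle_informative (adjoin H t g) with
  | left e => let p := proj1_sig (constructive_indefinite_description _ e) in (w p.1 * z ^ p.2)%C
  | right _ => 1%C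
  end.

Lemma adjoin_charE h k : H h -> adjoin_char (h + t *+ k)%G = (w h * z ^ k)%C.
Proof.
move=> Hh; rewrite /adjoin_char; case: excluded_middle_informative => [e|[]].
  by case: constructive_indefinite_description => -[h' k'] /= [Hh' E]; apply: adjoin_char_wd.
by exists (h, k).
Qed.

Lemma sub_adjoin g : H g -> adjoin H t g.
Proof. by exists (g, 0%nat); rewrite /= mulr0n addr0. Qed.

Lemma adjoin_self : adjoin H t t.
Proof. by exists (0%G, 1%nat); rewrite /= add0r mulr1n; split => //; apply: HH.1. Qed.

Lemma adjoinD x y : adjoin H t x -> adjoin H t y -> adjoin H t (x + y)%G.
Proof.
move=> [[h1 k1] /= [H1 ->]] [[h2 k2] /= [H2 ->]].
exists ((h1 + h2)%G, (k1 + k2)%nat); split; first exact: subgroupD.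
by rewrite /= mulrnDr addrACA.
Qed.

Lemma adjoinN x : adjoin H t x -> adjoin H t (- x)%G.
Proof.
move=> [[h k] /= [Hh ->]].
exists ((- h - (t *+ m) *+ k)%G, (m.-1 * k)%nat); split => /=.
  by apply: HH.2; [apply: subgroupN | apply: subgroupMn].
have -> : ((t *+ m) *+ k = t *+ k + t *+ (m.-1 * k))%G.
  by rewrite -mulrnA -mulrnDr -mulSn prednK.
by rewrite [in RHS]opprD addrA subrK opprD.
Qed.

Lemma adjoin_subgroup : is_subgroup (adjoin H t).
Proof.
split; first exact: sub_adjoin HH.1.
by move=> x y Hx Hy; apply: adjoinD => //; apply: adjoinN.
Qed.

Lemma adjoin_char_on : char_on (adjoin H t) adjoin_char.
Proof.
split=> [_ [[h k] /= [Hh ->]] | _ _ [[h1 k1] /= [H1 ->]] [[h2 k2] /= [H2 ->]]].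
  by rewrite adjoin_charE // Cmod_mult Cmod_pow Cmod_z Hw.1 // pow1 Rmult_1_l.
rewrite addrACA -mulrnDr !adjoin_charE //; last exact: subgroupD.
by rewrite Hw.2 // Cpow_add_r; ring.
Qed.

Lemma adjoin_char_sub g : H g -> adjoin_char g = w g.
Proof. by move=> Hg; have := adjoin_charE 0 Hg; rewrite mulr0n addr0 /= Cmult_1_r. Qed.

Lemma adjoin_char_t : adjoin_char t = z.
Proof.
have := adjoin_charE 1 HH.1; rewrite mulr1n add0r => ->.
by rewrite (char_on0 HH Hw) Cmult_1_l Cpow_1_r.
Qed.

End Adjoin.

Lemma char_on_extend_seq (s : seq G) : forall H w, is_subgroup H -> char_on H w ->
  (forall g, exists2 n, (0 < n)%nat & H (g *+ n)%G) ->
  (forall g, H g \/ exists2 t, t \in s & H (g - t)%G) ->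
  exists2 chi, is_character chi & forall g, H g -> chi g = w g.
Proof.
elim: s => [|t s IH] H w HH Hw Htor Hcov.
  exists w => [|//]; apply/char_onT; split=> [g _ | g h _ _]; first apply: Hw.1.
    by case: (Hcov g) => // -[].
  by apply: Hw.2; [case: (Hcov g) | case: (Hcov h)] => // -[].
have [n n_gt0 Htn] := Htor t.
have [m [m_gt0 Htm m_min]] := exists_min_order n_gt0 Htn.
have [z [Cmod_z z_root]] := exists_nth_root m_gt0 (Hw.1 _ Htm).
have HH' := adjoin_subgroup HH m_gt0 Htm.
have Hw' := adjoin_char_on HH Hw m_gt0 Htm m_min Cmod_z z_root.
have [|g|chi Hchi Hext] := IH _ _ HH' Hw'.
- by move=> g; have [k k_gt0 Hgk] := Htor g; exists k => //; apply: sub_adjoin.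
- case: (Hcov g) => [Hg | [t' Ht' Hgt']]; first by left; apply: sub_adjoin.
  move: Ht' Hgt'; rewrite in_cons => /orP [/eqP -> Hgt | Ht' Hgt].
    by left; rewrite -(subrK t g); apply: (adjoinD HH); [apply: sub_adjoin | apply: adjoin_self].
  by right; exists t' => //; apply: sub_adjoin.
exists chi => // g Hg; rewrite Hext; last exact: sub_adjoin.
exact: (adjoin_char_sub HH Hw m_gt0 Htm m_min z_root).
Qed.

Lemma finite_index_torsion H : is_subgroup H -> finite_index H ->
  forall g, exists2 n, (0 < n)%nat & H (g *+ n)%G.
Proof.
move=> HH [s Hs] g.
(* Pigeonhole: two of g *+ 0, ..., g *+ size s lie in the same coset. *)
have [f Hf] : exists f : nat -> G, forall k, f k \in s /\ H (g *+ k - f k)%G.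
  apply: (ClassicalEpsilon.choice (fun k t => t \in s /\ H (g *+ k - t)%G)) => k.
  by have [t Ht Hk] := Hs (g *+ k)%G; exists t.
have Hsub : {subset map f (iota 0 (size s).+1) <= s}.
  by move=> _ /mapP [k _ ->]; apply: (Hf k).1.
have /(uniqPn 0%G) [i [j [lt_ij lt_j]]] : ~~ uniq (map f (iota 0 (size s).+1)).
  by apply/negP => /uniq_leq_size /(_ Hsub); rewrite size_map size_iota ltnn.
rewrite size_map size_iota in lt_j.
rewrite !(nth_map 0%nat) ?size_iota ?(ltn_trans lt_ij) // !nth_iota ?(ltn_trans lt_ij) // !add0n => Efij.
exists (j - i)%nat; first by rewrite subn_gt0.
have -> : (g *+ (j - i) = (g *+ j - f j) - (g *+ i - f i))%G.
  by rewrite mulrnBr ?(ltnW lt_ij) // Efij opprB addrA subrK.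
by apply: HH.2; apply: (Hf _).2.
Qed.

Lemma finite_index_sub H H' : (forall g, H g -> H' g) -> finite_index H -> finite_index H'.
Proof. by move=> HH' [s Hs]; exists s => g; have [t Ht Hgt] := Hs g; exists t => //; apply: HH'. Qed.

Lemma char_extend H w : is_subgroup H -> finite_index H -> char_on H w ->
  exists2 chi, is_character chi & forall g, H g -> chi g = w g.
Proof.
move=> HH Hfin Hw; have Htor := finite_index_torsion HH Hfin.
case: Hfin => s Hs.
by apply: (char_on_extend_seq (s := s)) => // g; right; apply: Hs.
Qed.

Lemma char_separate H x : is_subgroup H -> finite_index H -> ~ H x ->
  exists chi, [/\ is_character chi, forall g, H g -> chi g = 1%C & chi x <> 1%C].
Proof.
move=> HH Hfin Hx.
have [n n_gt0 Hxn] := finite_index_torsion HH Hfin x.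
have [m [m_gt0 Hxm m_min]] := exists_min_order n_gt0 Hxn.
have m_gt1 : (1 < m)%nat.
  by rewrite ltn_neqAle m_gt0 andbT; apply/eqP => m1; subst m; rewrite mulr1n in Hxm.
pose one (_ : G) := 1%C.
have Hone : char_on H one by split=> *; rewrite /one ?Cmod_1 ?Cmult_1_l.
have z_root : (zeta m 1 ^ m)%C = one (x *+ m)%G by rewrite zeta_expn.
have Hfin' := finite_index_sub (@sub_adjoin H x) Hfin.
have [chi Hchi Hext] := char_extend (adjoin_subgroup HH m_gt0 Hxm) Hfin'
  (adjoin_char_on HH Hone m_gt0 Hxm m_min (Cmod_zeta m 1) z_root).
exists chi; split => // [g Hg|].
  by rewrite Hext ?(adjoin_char_sub HH Hone m_gt0 Hxm m_min z_root) //; apply: sub_adjoin.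
rewrite Hext; last exact: adjoin_self.
by rewrite (adjoin_char_t HH Hone m_gt0 Hxm m_min z_root); apply: zeta1_neq1.
Qed.

End PartialCharacters.

Section BohrNeighbourhoods.
Variable G : zmodType.
Implicit Types (A : G -> Prop) (chi : G -> C).

Lemma bohr_setP r (chi : nat -> G -> C) eps g :
  bohr_set r chi eps g <-> forall i, (i < r)%nat -> Cmod (chi i g - 1) < eps.
Proof. by []. Qed.

Definition contains_bohr_nbhd A := exists2 B, bohr_nbhd B & forall g, B g -> A g.

Lemma contains_bohr_nbhdW A A' :
  (forall g, A g -> A' g) -> contains_bohr_nbhd A -> contains_bohr_nbhd A'.
Proof. by move=> AA' [B HB BA]; exists B => // g /BA /AA'. Qed.

Lemma contains_bohr_set r (chi : nat -> G -> C) eps :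
  (forall i, (i < r)%nat -> is_character (chi i)) -> 0 < eps ->
  contains_bohr_nbhd (bohr_set r chi eps).
Proof. by move=> Hchi Heps; exists (bohr_set r chi eps) => //; exists r, chi, eps. Qed.

Lemma contains_bohr_nbhdT : contains_bohr_nbhd (fun _ => True).
Proof.
have Hchi i : (i < 0)%nat -> is_character ((fun _ _ => 1%C) i : G -> C) by [].
exact: contains_bohr_nbhdW (contains_bohr_set Hchi Rlt_0_1).
Qed.

Lemma contains_char_near chi eps : is_character chi -> 0 < eps ->
  contains_bohr_nbhd (fun g => Cmod (chi g - 1) < eps).
Proof.
move=> Hchi Heps.
have Hchi' i : (i < 1)%nat -> is_character ((fun _ => chi) i) by [].
apply: contains_bohr_nbhdW (contains_bohr_set Hchi' Heps).
by move=> g /(_ 0%nat isT).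
Qed.

Lemma contains_bohr_nbhdI A1 A2 : contains_bohr_nbhd A1 -> contains_bohr_nbhd A2 ->
  contains_bohr_nbhd (fun g => A1 g /\ A2 g).
Proof.
move=> [B1 [r1 [chi1 [e1 [Hchi1 [He1 HB1]]]]] BA1] [B2 [r2 [chi2 [e2 [Hchi2 [He2 HB2]]]]] BA2].
pose chi i := if (i < r1)%nat then chi1 i else chi2 (i - r1)%nat.
have Hchi i : (i < r1 + r2)%nat -> is_character (chi i).
  rewrite /chi; case: (ltnP i r1) => [lt_i _ | le_r1i lt_i]; first exact: Hchi1.
  by apply: Hchi2; rewrite ltn_subLR.
apply: contains_bohr_nbhdW (contains_bohr_set Hchi (Rmin_pos _ _ He1 He2)).
move=> g Hg; split; [apply/BA1/HB1 | apply/BA2/HB2] => i Hi.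
  have := Hg i (ltn_addr _ Hi); rewrite /chi Hi; have := Rmin_l e1 e2; lra.
have := Hg (r1 + i)%nat; rewrite ltn_add2l /chi (ltnNge (r1 + i)) leq_addr addKn /= => /(_ Hi).
have := Rmin_r e1 e2; lra.
Qed.

Lemma contains_bohr_nbhd_all (T : eqType) (s : seq T) (A : T -> G -> Prop) :
  (forall x, x \in s -> contains_bohr_nbhd (A x)) ->
  contains_bohr_nbhd (fun g => forall x, x \in s -> A x g).
Proof.
elim: s => [|y s IH] HA.
  exact: contains_bohr_nbhdW contains_bohr_nbhdT.
apply: contains_bohr_nbhdW (contains_bohr_nbhdI (HA y (mem_head _ _)) (IH _)).
  by move=> g [Hy Hs] x; rewrite in_cons => /orP [/eqP -> | /Hs].
by move=> x Hx; apply: HA; rewrite in_cons Hx orbT.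
Qed.

Lemma contains_bohr_subgroup H : is_subgroup H -> finite_index H -> contains_bohr_nbhd H.
Proof.
move=> HH Hfin; have [s Hs] := Hfin.
have Hcoset t : contains_bohr_nbhd (fun g => H (g - t)%G -> H g).
  case: (classic (H t)) => Ht.
    apply: contains_bohr_nbhdW contains_bohr_nbhdT => g _ Hgt.
    by rewrite -(subrK t g); apply: subgroupD.
  have [chi [Hchi Hchi1 Hchit]] := char_separate HH Hfin Ht.
  apply: contains_bohr_nbhdW (contains_char_near Hchi (Cmod_sub1_gt0 Hchit)) => g Hg Hgt; exfalso.
  by move: Hg; rewrite -(characterB Hchi g t) Hchi1 // Cmult_1_l; lra.
apply: contains_bohr_nbhdW (contains_bohr_nbhd_all (s := s) (fun t _ => Hcoset t)) => g Hg.
by have [t Ht Hgt] := Hs g; apply: Hg Hgt.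
Qed.

Lemma bohr_nbhd0 (B : G -> Prop) : bohr_nbhd B -> B 0%G.
Proof.
move=> [r [chi [eps [Hchi [Heps HB]]]]]; apply/HB/bohr_setP => i Hi.
rewrite -(subrr 0%G) (Cmod_characterB_sub1 (Hchi i Hi)).
by rewrite (_ : chi i 0%G - chi i 0%G = RtoC 0)%C ?Cmod_0 //; ring.
Qed.

Lemma bohr_nbhdN (B : G -> Prop) g : bohr_nbhd B -> B g -> B (- g)%G.
Proof.
move=> [r [chi [eps [Hchi [Heps HB]]]]] /HB /bohr_setP Hg; apply/HB/bohr_setP => i Hi.
rewrite -sub0r (Cmod_characterB_sub1 (Hchi i Hi)) (character0 (Hchi i Hi)) -Cmod_opp.
by rewrite (_ : - _ = chi i g - 1)%C; [apply: Hg | ring].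
Qed.

End BohrNeighbourhoods.

HB.instance Definition _ := Monoid.isComLaw.Build C 1%C Cmult Cmult_assoc Cmult_comm Cmult_1_l.

Notation "\cprod_ ( i < r ) F" := (\big[Cmult/RtoC 1]_(i < r) F)
  (at level 41, F at level 41, i, r at level 50).

Lemma Cmod_cprod r (F : 'I_r -> C) :
  (forall i, Cmod (F i) = 1) -> Cmod (\cprod_(i < r) F i) = 1.
Proof.
move=> HF; apply: (big_ind (fun x => Cmod x = 1)) => [|x y Hx Hy|i _]; last exact: HF.
  exact: Cmod_1.
by rewrite Cmod_mult Hx Hy Rmult_1_l.
Qed.

Lemma Cmult_unit_inj_r a b c : Cmod c = 1 -> (a * c = b * c)%C -> a = b.
Proof.
move=> Hc E; have Hc0 : c <> RtoC 0 by move=> c0; rewrite c0 Cmod_0 in Hc; lra.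
by rewrite -[LHS](Cmult_1_r) -(Cinv_r c) // Cmult_assoc E -Cmult_assoc Cinv_r // Cmult_1_r.
Qed.

Lemma Cmod_mul_sub a b c d : Cmod b = 1 -> Cmod c = 1 ->
  Cmod (a * b - c * d) <= Cmod (a - c) + Cmod (b - d).
Proof.
move=> Hb Hc; have -> : (a * b - c * d = (a - c) * b + c * (b - d))%C by ring.
by apply: Rle_trans (Cmod_triangle _ _) _; rewrite !Cmod_mult Hb Hc; lra.
Qed.

Lemma Cmod_pow_sub a c k : Cmod a = 1 -> Cmod c = 1 ->
  Cmod (a ^ k - c ^ k) <= INR k * Cmod (a - c).
Proof.
move=> Ha Hc; elim: k => [|k IH].
  by rewrite /= Rmult_0_l (_ : 1 - 1 = 0)%C ?Cmod_0; [lra | ring].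
rewrite !Cpow_S S_INR; apply: Rle_trans (Cmod_mul_sub _ _ _ _) _ => //.
  by rewrite Cmod_pow Ha pow1.
lra.
Qed.

Lemma Cmod_cprod_pow_sub r (F F' : 'I_r -> C) (M : 'I_r -> nat) n e :
  (forall i, Cmod (F i) = 1) -> (forall i, Cmod (F' i) = 1) ->
  (forall i, (M i <= n)%nat) -> (forall i, Cmod (F i - F' i) <= e) ->
  Cmod (\cprod_(i < r) (F i ^ M i) - \cprod_(i < r) (F' i ^ M i))%C <= INR r * INR n * e.
Proof.
elim: r F F' M => [|r IH] F F' M HF HF' HM He.
  by rewrite !big_ord0 /= (_ : 1 - 1 = 0)%C ?Cmod_0; [lra | ring].
have He0 : 0 <= e by apply: Rle_trans (He ord0); apply: Cmod_ge_0.
rewrite !big_ord_recr.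
apply: Rle_trans (Cmod_mul_sub _ _ _ _) _.
- by rewrite Cmod_pow HF pow1.
- by apply: Cmod_cprod => i; rewrite Cmod_pow HF' pow1.
have IHr := IH (fun i => F (widen_ord (leqnSn r) i)) (fun i => F' (widen_ord (leqnSn r) i))
  (fun i => M (widen_ord (leqnSn r) i)) (fun i => HF _) (fun i => HF' _) (fun i => HM _) (fun i => He _).
have Hlast := Cmod_pow_sub (M ord_max) (HF ord_max) (HF' ord_max).
have HMn : INR (M ord_max) * Cmod (F ord_max - F' ord_max) <= INR n * e.
  by apply: Rmult_le_compat; [apply: pos_INR | apply: Cmod_ge_0 | apply/le_INR/leP | ].
apply: Rle_trans (Rplus_le_compat _ _ _ _ IHr (Rle_trans _ _ _ Hlast HMn)) _.
rewrite S_INR; lra.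
Qed.

Lemma character_cprod_pow (G : zmodType) r (chi : 'I_r -> G -> C) (M : 'I_r -> nat) :
  (forall i, is_character (chi i)) -> is_character (fun g => \cprod_(i < r) (chi i g ^ M i)%C).
Proof.
move=> Hchi; split=> [g | g h].
  by apply: Cmod_cprod => i; rewrite Cmod_pow (Hchi i).1 pow1.
by rewrite -big_split; apply: eq_bigr => i _; rewrite (Hchi i).2 Cpow_mult_l.
Qed.

Section ZpVectors.
Variables (n r : nat).
Hypothesis n_gt1 : (1 < n)%nat.

Definition zeta_Zp (x : 'Z_n) : C := zeta n x.

Let modZp k : (k %% (Zp_trunc n).+2 = k %% n)%nat.
Proof. by rewrite Zp_cast. Qed.

Lemma zeta_ZpD x y : zeta_Zp (x + y)%G = (zeta_Zp x * zeta_Zp y)%C.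
Proof. by rewrite /zeta_Zp /= modZp zeta_modn ?zetaD // ltnW. Qed.

Lemma zeta_Zp_inZp j : zeta_Zp (inZp j) = zeta n j.
Proof. by rewrite /zeta_Zp /= modZp zeta_modn // ltnW. Qed.

Lemma Zvec_mulrn (y : {ffun 'I_r -> 'Z_n}) : (y *+ n)%G = 0%G.
Proof. by apply/ffunP => i; rewrite ffunMnE ffunE -mulr_natr pchar_Zp // mulr0. Qed.

Definition unit_vec (i : 'I_r) : {ffun 'I_r -> 'Z_n} := [ffun j => if j == i then 1%G else 0%G].

Lemma Zvec_decomp (y : {ffun 'I_r -> 'Z_n}) : y = (\sum_(i < r) unit_vec i *+ y i)%G.
Proof.
apply/ffunP => j; rewrite sum_ffunE (bigD1 j) //= big1 ?addr0 => [|i /negbTE ij].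
  by rewrite ffunMnE ffunE eqxx natr_Zp.
by rewrite ffunMnE ffunE eq_sym ij mul0rn.
Qed.

Lemma Zvec_char_exponents (th : {ffun 'I_r -> 'Z_n} -> C) : is_character th ->
  exists2 M : 'I_r -> nat, (forall i, M i < n)%nat &
    forall y, th y = \cprod_(i < r) (zeta_Zp (y i) ^ M i)%C.
Proof.
move=> Hth.
have [M HM] : exists M : 'I_r -> nat, forall i, (M i < n)%nat /\ th (unit_vec i) = zeta n (M i).
  apply: (ClassicalEpsilon.choice (fun i j => (j < n)%nat /\ th (unit_vec i) = zeta n j)) => i.
  have Hroot : (th (unit_vec i) ^ n)%C = 1%C by rewrite -characterMn // Zvec_mulrn character0.
  by have [j lt_jn ->] := root_of_unity_zeta (ltnW n_gt1) (Hth.1 _) Hroot; exists j.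
exists M => [i|y]; first exact: (HM i).1.
rewrite {1}(Zvec_decomp y) (big_morph th (id1 := RtoC 1) (op1 := Cmult)).
- by apply: eq_bigr => i _; rewrite characterMn // (HM i).2 /zeta_Zp !zetaX mulnC.
- exact: Hth.2.
- exact: character0.
Qed.

End ZpVectors.

Section TorsionImage.
Variables (G : zmodType) (n r : nat) (chi : nat -> G -> C).
Hypotheses (n_gt1 : (1 < n)%nat) (Hchi : forall i : 'I_r, is_character (chi i)).

(* With the n-th roots of unity identified with 'Z_n: the image of the
   n-torsion of G under k |-> (chi_i k)_i. *)
Definition torsion_image (y : {ffun 'I_r -> 'Z_n}) :=
  exists2 k : G, (k *+ n)%G = 0%G & forall i : 'I_r, chi i k = zeta_Zp (y i).

Lemma torsion_image_subgroup : is_subgroup torsion_image.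
Proof.
split=> [|x y [k1 K1 E1] [k2 K2 E2]].
  by exists 0%G => [|i]; rewrite ?mul0rn // character0 // ffunE /zeta_Zp zeta0.
exists (k1 - k2)%G => [|i]; first by rewrite mulrnBl K1 K2 subrr.
apply: (@Cmult_unit_inj_r _ _ (chi i k2)); first exact: (Hchi i).1.
by rewrite characterB // E1 E2 -zeta_ZpD // !ffunE subrK.
Qed.

Lemma torsion_image_of k : (k *+ n)%G = 0%G ->
  exists y : {ffun 'I_r -> 'Z_n}, forall i : 'I_r, chi i k = zeta_Zp (y i).
Proof.
move=> Hk.
have [J HJ] : exists J : 'I_r -> nat, forall i : 'I_r, chi i k = zeta n (J i).
  apply: (ClassicalEpsilon.choice (fun (i : 'I_r) j => chi i k = zeta n j)) => i.
  have Hroot : (chi i k ^ n)%C = 1%C by rewrite -characterMn // Hk character0.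
  by have [j _ ->] := root_of_unity_zeta (ltnW n_gt1) ((Hchi i).1 k) Hroot; exists j.
by exists [ffun i => inZp (J i)] => i; rewrite ffunE zeta_Zp_inZp.
Qed.

Lemma dual_exponents a : ~ torsion_image a ->
  exists2 M : 'I_r -> nat, (forall i, M i <= n)%nat &
    (forall k, (k *+ n)%G = 0%G -> \cprod_(i < r) (chi i k ^ M i)%C = 1%C) /\
    \cprod_(i < r) (zeta_Zp (a i) ^ M i)%C <> 1%C.
Proof.
move=> Ha.
have Hfin : finite_index torsion_image.
  exists (enum {ffun 'I_r -> 'Z_n}) => y; exists y; first by rewrite mem_enum.
  by rewrite subrr; apply: torsion_image_subgroup.1.
have [th [Hth Hth1 Htha]] := char_separate torsion_image_subgroup Hfin Ha.
have [M lt_Mn HM] := Zvec_char_exponents n_gt1 Hth.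
exists M => [i|]; first exact: ltnW.
split=> [k Hk|]; last by rewrite -HM.
have [y Hy] := torsion_image_of Hk.
rewrite -[RHS](Hth1 y); last by exists k.
by rewrite HM; apply: eq_bigr => i _; rewrite Hy.
Qed.

End TorsionImage.

Lemma mul_subgroup_subgroup (G : zmodType) (c : int) : is_subgroup (@mul_subgroup G c).
Proof.
split=> [|_ _ [h1 ->] [h2 ->]]; first by exists 0%G; rewrite mul0rz.
by exists (h1 - h2)%G; rewrite mulrzBl.
Qed.

Section Descent.
Variables (G : zmodType) (n : nat).
Hypothesis Hfin : finite_index (@mul_subgroup G n).

Lemma char_descend (psi : G -> C) : is_character psi -> (forall k, (k *+ n)%G = 0%G -> psi k = 1%C) ->
  exists2 om, is_character om & forall h, om (h *+ n)%G = psi h.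
Proof.
move=> Hpsi psi_tor.
have [pre Hpre] : exists pre : G -> G, forall g, @mul_subgroup G n g -> g = (pre g *+ n)%G.
  apply: (ClassicalEpsilon.choice (fun g h => @mul_subgroup G n g -> g = (h *+ n)%G)) => g.
  case: (classic (@mul_subgroup G n g)) => [[h ->] | Hg]; last by exists 0%G.
  by exists h; rewrite pmulrn.
have psi_pre h : psi (pre (h *+ n)%G) = psi h.
  have Eh : (pre (h *+ n) *+ n = h *+ n)%G by rewrite -Hpre //; exists h; rewrite pmulrn.
  have Htor : ((h - pre (h *+ n)) *+ n = 0)%G by rewrite mulrnBl Eh subrr.
  by rewrite -[RHS](characterB Hpsi h (pre (h *+ n)%G)) (psi_tor _ Htor) Cmult_1_l.
have Hw : char_on (@mul_subgroup G n) (fun g => psi (pre g)).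
  split=> [g _ | _ _ [h1 ->] [h2 ->]]; first exact: Hpsi.1.
  by rewrite -!pmulrn -mulrnDl !psi_pre Hpsi.2.
have [om Hom Hext] := char_extend (mul_subgroup_subgroup G n) Hfin Hw.
by exists om => // h; rewrite Hext ?psi_pre //; exists h; rewrite pmulrn.
Qed.

End Descent.

Section MulImage.
Variables (G : zmodType) (n r : nat) (chi : nat -> G -> C).
Hypotheses (n_gt1 : (1 < n)%nat) (Hchi : forall i : 'I_r, is_character (chi i)).
Hypothesis Hfin : finite_index (@mul_subgroup G n).

Let Hchi_nat i : (i < r)%nat -> is_character (chi i).
Proof. by move=> Hi; apply: (Hchi (Ordinal Hi)). Qed.

(* Outside the torsion image, the dual exponents M of a give a character om of G
   with om (h *+ n) = prod chi_i h ^ M_i; when the chi_i h approximate the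
   pattern a, this is close to prod zeta_Zp (a i) ^ M_i <> 1, so om g is far
   from 1. *)
Lemma contains_torsion_image_test (a : {ffun 'I_r -> 'Z_n}) :
  contains_bohr_nbhd (fun g => forall h, g = (h *+ n)%G ->
    (forall i : 'I_r, Cmod (chi i h - zeta_Zp (a i)) <= Cmod (chi i g - 1)) ->
    torsion_image chi a).
Proof.
case: (classic (torsion_image chi a)) => Ha.
  apply: (@contains_bohr_nbhdW G (fun _ => True)); last exact: contains_bohr_nbhdT.
  by move=> g _ h _ _.
have [M le_Mn [M_tor M_a]] := dual_exponents n_gt1 Hchi Ha.
have Hpsi := character_cprod_pow M Hchi.
have [om Hom om_psi] := char_descend Hfin Hpsi M_tor.
set za := \cprod_(i < r) (zeta_Zp (a i) ^ M i)%C in M_a.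
have d_gt0 := Cmod_sub1_gt0 M_a.
have Hrn : 0 < INR r * INR n + 1 by have := Rmult_le_pos _ _ (pos_INR r) (pos_INR n); lra.
set del := Cmod (za - 1) / (INR r * INR n + 1).
have del_gt0 : 0 < del by apply: Rdiv_lt_0_compat.
apply: contains_bohr_nbhdW (contains_bohr_nbhdI (contains_bohr_set Hchi_nat del_gt0)
  (contains_char_near Hom del_gt0)).
move=> g [/bohr_setP Hg Hom_g] h Eg Hh; exfalso.
set p := \cprod_(i < r) (chi i h ^ M i)%C.
have Happrox : Cmod (p - za) <= INR r * INR n * del.
  apply: (Cmod_cprod_pow_sub (F' := fun i => zeta_Zp (a i))) => // i.
  - exact: (Hchi i).1.
  - exact: Cmod_zeta.
  - exact: Rlt_le (Rle_lt_trans _ _ _ (Hh i) (Hg i (ltn_ord i))).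
rewrite Eg om_psi -/p in Hom_g.
have Htri : Cmod (za - 1) <= Cmod (p - za) + Cmod (p - 1).
  rewrite -[Cmod (p - za)]Cmod_opp; apply: Rle_trans (Cmod_triangle _ _).
  by apply: Req_le; f_equal; ring.
have : del * (INR r * INR n + 1) = Cmod (za - 1) by rewrite /del; field; lra.
nra.
Qed.

Lemma contains_mul_image eps : 0 < eps ->
  contains_bohr_nbhd (fun g => exists2 b, bohr_set r chi eps b & g = (b *+ n)%G).
Proof.
move=> eps_gt0.
have HnG := contains_bohr_subgroup (mul_subgroup_subgroup G n) Hfin.
have Htests := contains_bohr_nbhd_all (s := enum {ffun 'I_r -> 'Z_n})
  (fun a _ => contains_torsion_image_test a).
apply: contains_bohr_nbhdW (contains_bohr_nbhdI HnG
  (contains_bohr_nbhdI (contains_bohr_set Hchi_nat eps_gt0) Htests)).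
move=> g [[h Eg] [/bohr_setP Hg Htest]]; rewrite -pmulrn in Eg.
have [J HJ] : exists J : 'I_r -> nat, forall i : 'I_r,
    Cmod (chi i h - zeta n (J i)) <= Cmod (chi i g - 1).
  apply: (ClassicalEpsilon.choice
    (fun (i : 'I_r) j => Cmod (chi i h - zeta n j) <= Cmod (chi i g - 1))) => i.
  have [j _ Hj] := near_root_of_unity (ltnW n_gt1) ((Hchi i).1 h).
  by exists j; rewrite Eg (characterMn (Hchi i)).
pose a : {ffun 'I_r -> 'Z_n} := [ffun i => inZp (J i)].
have [|k Hk Hka] := Htest a (mem_enum _ a) h Eg.
  by move=> i; rewrite ffunE zeta_Zp_inZp.
exists (h - k)%G; last by rewrite mulrnBl Hk subr0.
apply/bohr_setP => i Hi; rewrite (Cmod_characterB_sub1 (Hchi_nat Hi)).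
rewrite (Hka (Ordinal Hi)) ffunE zeta_Zp_inZp //.
exact: Rle_lt_trans (HJ (Ordinal Hi)) (Hg i Hi).
Qed.

End MulImage.

Lemma contains_bohr_mul_image (G : zmodType) (B : G -> Prop) n :
  (0 < n)%nat -> bohr_nbhd B -> finite_index (@mul_subgroup G n) ->
  contains_bohr_nbhd (fun g => exists2 b, B b & g = (b *+ n)%G).
Proof.
move=> n_gt0 HB Hfin; case: (ltngtP n 1) => [|n_gt1|->].
- by rewrite ltnS leqn0 => /eqP n0; rewrite n0 in n_gt0.
- have [r [chi [eps [Hchi [eps_gt0 HBE]]]]] := HB.
  have Hchi' (i : 'I_r) : is_character (chi i) by apply: Hchi.
  apply: contains_bohr_nbhdW (contains_mul_image n_gt1 Hchi' Hfin eps_gt0).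
  by move=> g [b Hb ->]; exists b; first exact/HBE.
- by exists B => // g Hg; exists g; rewrite ?mulr1n.
Qed.

Theorem lemma1p6 (G : countZmodType) (B : G -> Prop) (c : int) :
  bohr_nbhd B ->
  finite_index (@mul_subgroup G c) ->
  exists B' : G -> Prop,
    bohr_nbhd B' /\ (forall g : G, B' g -> exists2 b : G, B b & g = intmul b c).
Proof.
move=> HB Hfin.
suff [B' HB' B'B] : contains_bohr_nbhd (fun g => exists2 b, B b & g = intmul b c).
  by exists B'.
case: c Hfin => [[|n] | m] Hfin.
- apply: contains_bohr_nbhdW (contains_bohr_subgroup (mul_subgroup_subgroup G (Posz 0)) Hfin).
  by move=> _ [h ->]; exists 0%G; [apply: bohr_nbhd0 | rewrite !mulr0z].
- apply: contains_bohr_nbhdW (contains_bohr_mul_image (ltn0Sn n) HB Hfin).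
  by move=> _ [b Hb ->]; exists b; rewrite // pmulrn.
- have Hfin' : finite_index (@mul_subgroup G m.+1).
    by apply: finite_index_sub Hfin => _ [h ->]; exists (- h)%G; rewrite NegzE mulrNz mulNrz.
  apply: contains_bohr_nbhdW (contains_bohr_mul_image (ltn0Sn m) HB Hfin').
  move=> _ [b Hb ->]; exists (- b)%G; first exact: bohr_nbhdN.
  by rewrite NegzE mulrNz mulNrz opprK pmulrn.
Qed.
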